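(* Let $\mathsf{k}$ be a field of characteristic zero, $S=\mathsf{k}[x_1,\dots,x_n]$ with $n\ge 2$, and $R=\mathsf{k}[X_1,\dots,X_n]$, with $S$ acting on $R$ by differentiation. Let $F\in R$ be a nonzero homogeneous polynomial of degree $d\ge 2$, let $A=S/\operatorname{Ann}_S(F)$, and let $\ell\in S_1$ be a linear form. Then for every $0\le i\le d$, $$\operatorname{diag}(i,M_{\ell,A})=h_{A^{(i)}},$$ i.e. $(M_{\ell,A})_{j,j+i}=\dim_{\mathsf{k}}\big(A^{(i)}\big)_j$ for all $0\le j\le d-i$.
   Context: $x_i$ acts on $R$ as $\partial/\partial X_i$; for $G\in R$, $\operatorname{Ann}_S(G)=\{g\in S: g\circ G=0\}$. $A=S/\operatorname{Ann}_S(F)$ is a graded Artinian Gorenstein algebra of socle degree $d$. For a graded algebra $B$, $h_B(j)=\dim_{\mathsf{k}}B_j$ is its Hilbert function. For $0\le i\le d$, $A^{(i)}:=S/\operatorname{Ann}_S(\ell^i\circ F)$ (the zero algebra if $\ell^i\circ F=0$), whose Hilbert function is viewed as the vector $(h_{A^{(i)}}(0),\dots,h_{A^{(i)}}(d-i))$. The rank matrix $M_{\ell,A}$ is the $(d+1)\times(d+1)$ matrix with rows and columns indexed by $0,\dots,d$, with $(M_{\ell,A})_{i,j}=\operatorname{rank}(\times\ell^{j-i}:A_i\to A_j)$ for $i\le j$ and $(M_{\ell,A})_{i,j}=0$ for $i>j$. For a $(d+1)\times(d+1)$ matrix $M$ and $0\le i\le d$, $\operatorname{diag}(i,M)=(M_{0,i},M_{1,i+1},\dots,M_{d-i,d})$.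 *)

From HB Require Import structures.
From mathcomp Require Import all_boot all_order all_algebra.
From mathcomp Require Import mpoly.
From Stdlib Require Import ClassicalEpsilon.

Set Implicit Arguments.
Unset Strict Implicit.
Unset Printing Implicit Defensive.

Import Order.TTheory GRing.Theory.
Local Open Scope ring_scope.

Section Apolarity.
Variables (k : fieldType) (n : nat).
Local Notation Poly := {mpoly k[n]}.

(* Contraction/differentiation action of S = k[x_1..x_n] on R = k[X_1..X_n]:
   both rings are modelled by {mpoly k[n]}; the monomial x^m acts as the
   partial derivative d^m/dX^m, extended k-linearly. *)
Definition act (g G : Poly) : Poly :=
  \sum_(m <- msupp g) g@_m *: G^`M[m].

Definition indep_mod_ann (G : Poly) (r : nat) (f : 'I_r -> Poly) : Prop :=
  forall c : 'I_r -> k,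
    act (\sum_(t < r) c t *: f t) G = 0 -> forall t, c t = 0.

(* r is the dimension of the subspace of S/Ann_S(G) spanned by the classes
   of the elements of V: the maximal number of elements of V whose classes
   are linearly independent. *)
Definition is_quot_dim (G : Poly) (V : Poly -> Prop) (r : nat) : Prop :=
  (exists f : 'I_r -> Poly, (forall t, V (f t)) /\ indep_mod_ann G f) /\
  (forall f : 'I_r.+1 -> Poly, (forall t, V (f t)) -> ~ indep_mod_ann G f).

Definition quot_dim (G : Poly) (V : Poly -> Prop) : nat :=
  epsilon (inhabits 0%N) (is_quot_dim G V).

(* Hilbert function of S/Ann_S(G): h(j) = dim_k (S/Ann_S(G))_j,
   the span of the classes of degree-j forms. (For G = 0 this is the zero
   algebra, with h = 0.) *)
Definition hilb (G : Poly) (j : nat) : nat :=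
  quot_dim G (fun p => p \is j.-homog).

(* rank of  x l^(j-i) : A_i -> A_j  where A = S/Ann_S(F): the dimension of the
   image, spanned by the classes of l^(j-i) g, g in S_i. *)
Definition rank_mul (l F : Poly) (i j : nat) : nat :=
  quot_dim F (fun p => exists g : Poly, g \is i.-homog /\ p = l ^+ (j - i) * g).

Definition rank_matrix (l F : Poly) (d : nat) : 'M[nat]_d.+1 :=
  \matrix_(i < d.+1, j < d.+1) (if (i <= j)%N then rank_mul l F i j else 0%N).

End Apolarity.

Definition mdiag (d i : nat) (M : 'M[nat]_d.+1) : seq nat :=
  [seq M (inord j) (inord (j + i)) | j <- iota 0 (d - i).+1].

Definition hilb_vec (k : fieldType) (n : nat) (G : {mpoly k[n]}) (m : nat)
  : seq nat := [seq hilb G j | j <- iota 0 m.+1].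

From HB Require Import structures.
From mathcomp Require Import all_boot all_order all_algebra.
From mathcomp Require Import ssrcomplements mpoly zify.
From Stdlib Require Import ClassicalEpsilon FunctionalExtensionality PropExtensionality.

(* Apolarity is a right action of S on R: (a b) o G = b o (a o G).  Hence the
   classes of l^i g_1, ..., l^i g_r are independent in S/Ann(F) exactly when
   those of g_1, ..., g_r are independent in S/Ann(l^i o F), so the rank of
   multiplication by l^i from A_j equals h_{A^(i)}(j). *)

Set Implicit Arguments.
Unset Strict Implicit.
Unset Printing Implicit Defensive.
Import GRing.Theory.
Local Open Scope ring_scope.

Section Apolarity.
Variables (k : fieldType) (n : nat).
Local Notation Poly := {mpoly k[n]}.
Implicit Types (a b g G : Poly) (c : k).

Lemma act_bigE (B : nat) g G : (msize g <= B)%N ->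
  act g G = \sum_(m : 'X_{1..n < B}) g@_m *: G^`M[m].
Proof.
move=> le_gB; rewrite /act (big_mksub 'X_{1..n < B}) ?msupp_uniq //=.
  by rewrite big_rmcond //= => m /memN_msupp_eq0 ->; rewrite scale0r.
by move=> m /msize_mdeg_lt /leq_trans; apply.
Qed.

Lemma act0l G : act 0 G = 0.
Proof. by rewrite /act msupp0 big_nil. Qed.

Lemma actDl a b G : act (a + b) G = act a G + act b G.
Proof.
pose B := (msize a + msize b + msize (a + b)).+1.
rewrite !(@act_bigE B) ?ltnS /B; try lia.
by rewrite -big_split; apply: eq_bigr => m _; rewrite mcoeffD scalerDl.
Qed.

Lemma actZl c g G : act (c *: g) G = c *: act g G.
Proof.
pose B := (msize g + msize (c *: g)).+1.
rewrite !(@act_bigE B) ?ltnS /B; try lia.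
by rewrite scaler_sumr; apply: eq_bigr => m _; rewrite mcoeffZ scalerA.
Qed.

Lemma act0r g : act g 0 = 0.
Proof. by rewrite /act big1 // => m _; rewrite raddf0 scaler0. Qed.

Lemma actDr g G1 G2 : act g (G1 + G2) = act g G1 + act g G2.
Proof.
by rewrite /act -big_split; apply: eq_bigr => m _; rewrite mderivmD scalerDr.
Qed.

Lemma actZr c g G : act g (c *: G) = c *: act g G.
Proof.
rewrite /act scaler_sumr; apply: eq_bigr => m _.
by rewrite mderivmZ !scalerA mulrC.
Qed.

Lemma actX (m : 'X_{1..n}) G : act 'X_[m] G = G^`M[m].
Proof. by rewrite /act msuppX big_seq1 mcoeffX eqxx scale1r. Qed.

Lemma act_mulX (m : 'X_{1..n}) b G : act ('X_[m] * b) G = act b (act 'X_[m] G).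
Proof.
elim/mpolyind: b => [|c m' b _ _ IHb]; first by rewrite mulr0 !act0l.
by rewrite mulrDr !actDl IHb -scalerAr -mpolyXD !actZl !actX mderivmDm.
Qed.

Lemma act_mul a b G : act (a * b) G = act b (act a G).
Proof.
elim/mpolyind: a => [|c m a _ _ IHa]; first by rewrite mul0r !act0l act0r.
by rewrite mulrDl -scalerAl !actDl !actZl act_mulX IHa actDr actZr.
Qed.

Section MulImage.
Variables (V : Poly -> Prop) (L F : Poly).
Local Notation LV := (fun p => exists g, V g /\ p = L * g).

Lemma indep_mod_ann_mull (r : nat) (f g : 'I_r -> Poly) :
  (forall t, f t = L * g t) -> indep_mod_ann F f <-> indep_mod_ann (act L F) g.
Proof.
move=> fE; suff actE (c : 'I_r -> k) :
    act (\sum_(t < r) c t *: f t) F = act (\sum_(t < r) c t *: g t) (act L F).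
  by split=> indep c; [rewrite -actE | rewrite actE]; apply: indep.
rewrite -act_mul mulr_sumr; congr act; apply: eq_bigr => t _.
by rewrite fE scalerAr.
Qed.

Lemma factor_mull (r : nat) (f : 'I_r -> Poly) : (forall t, LV (f t)) ->
  exists g : 'I_r -> Poly, forall t, V (g t) /\ f t = L * g t.
Proof. exact: choice. Qed.

Lemma is_quot_dim_mull (r : nat) : is_quot_dim F LV r <-> is_quot_dim (act L F) V r.
Proof.
split=> -[[f [Vf indep_f]] maximal].
- have [g gP] := factor_mull Vf; split.
    exists g; split=> [t|]; first by case: (gP t).
    by apply/(indep_mod_ann_mull (f := f)) => // t; case: (gP t).
  move=> g' Vg' indep_g'; apply: (maximal (fun t => L * g' t)) => [t|].
    by exists (g' t).
  exact/(indep_mod_ann_mull (g := g')).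
- split.
    exists (fun t => L * f t); split=> [t|]; first by exists (f t).
    exact/(indep_mod_ann_mull (g := f)).
  move=> f' Vf' indep_f'; have [g gP] := factor_mull Vf'.
  apply: (maximal g) => [t|]; first by case: (gP t).
  by apply/(indep_mod_ann_mull (f := f')) => // t; case: (gP t).
Qed.

Lemma quot_dim_mull : quot_dim F LV = quot_dim (act L F) V.
Proof.
rewrite /quot_dim; congr epsilon; apply: functional_extensionality => r.
exact/propositional_extensionality/is_quot_dim_mull.
Qed.

End MulImage.

Lemma rank_mul_hilb (l F : Poly) (i j : nat) :
  rank_mul l F j (j + i) = hilb (act (l ^+ i) F) j.
Proof. by rewrite /rank_mul addKn quot_dim_mull. Qed.

End Apolarity.

Theorem proposition3p4 (k : fieldType) (hchar : [pchar k] =i pred0)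
  (n : nat) (hn : (2 <= n)%N) (d : nat) (hd : (2 <= d)%N)
  (F : {mpoly k[n]}) (hF0 : F != 0) (hFd : F \is d.-homog)
  (l : {mpoly k[n]}) (hl : l \is 1.-homog) (i : nat) (hi : (i <= d)%N) :
  mdiag i (rank_matrix l F d) = hilb_vec (act (l ^+ i) F) (d - i).
Proof.
apply/eq_in_map => j; rewrite mem_iota ltnS => /andP[_ le_j].
have le_ji : (j + i <= d)%N by rewrite -(subnK hi) leq_add2r.
rewrite mxE !inordK ?ltnS ?(leq_trans le_j (leq_subr _ _)) // leq_addr.
exact: rank_mul_hilb.
Qed.
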